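(* Let $H$ be a punctured torus with a fixed orientation, $q\in\partial H$, and let $\rho:\pi_1(H,q)\to\mathrm{PSL}_2\mathbb{R}$ be a virtually abelian representation with $\mathrm{Tr}\,\rho([\alpha,\beta])>2$ for a free basis $(\alpha,\beta)$ of $\pi_1(H,q)$. Then $\rho$ is $\varepsilon$-bad for every $\varepsilon>0$.
   Context: A representation is virtually abelian if its image contains an abelian subgroup of finite index. For $g,h\in\mathrm{PSL}_2\mathbb{R}$ and $p\in\mathbb{H}^2$, $\mathcal{P}(g,h;p)$ is the (possibly degenerate) hyperbolic pentagon given by the closed geodesic polygon $p\to[g^{-1},h^{-1}](p)\to h(p)\to gh(p)\to h^{-1}gh(p)\to p$. For $\varepsilon>0$, $\rho$ is $\varepsilon$-good for the given orientation of $H$ if there are a free basis $(\alpha',\beta')$ of $\pi_1(H,q)$ with the same orientation as $(\alpha,\beta)$ and a point $p\in\mathbb{H}^2$ at distance less than $\varepsilon$ from the axis of the hyperbolic element $\rho([\alpha',\beta'])$ such that $\mathcal{P}(\rho(\alpha'),\rho(\beta');p)$ is non-degenerate, bounds an embedded disc, and has the specified orientation; otherwise $\rho$ is $\varepsilon$-bad. *)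

From Stdlib Require Import Reals Lra ZArith List.
Import ListNotations.
Open Scope R_scope.

(** * 2x2 real matrices; PSL_2(R) is handled through SL_2(R) lifts, all
      predicates below being invariant under M |-> -M. *)
Record mat2 := M2 { ma : R; mb : R; mc : R; md : R }.

Definition mmul (M N : mat2) : mat2 :=
  M2 (ma M * ma N + mb M * mc N) (ma M * mb N + mb M * md N)
     (mc M * ma N + md M * mc N) (mc M * mb N + md M * md N).
Definition mid : mat2 := M2 1 0 0 1.
Definition mneg (M : mat2) : mat2 := M2 (- ma M) (- mb M) (- mc M) (- md M).
(* inverse of a determinant-one matrix *)
Definition minv (M : mat2) : mat2 := M2 (md M) (- mb M) (- mc M) (ma M).
Definition mdet (M : mat2) : R := ma M * md M - mb M * mc M.
Definition mtr (M : mat2) : R := ma M + md M.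

(** * The free group F(a,b) = pi_1(H,q), as words modulo free reduction. *)
Inductive gen := Ga | Gb.
Definition letter := (gen * bool)%type. (* (generator, is_inverse) *)
Definition word := list letter.

Definition gen_eqb (g h : gen) : bool :=
  match g, h with Ga, Ga | Gb, Gb => true | _, _ => false end.
Definition letter_eqb (x y : letter) : bool :=
  gen_eqb (fst x) (fst y) && Bool.eqb (snd x) (snd y).
Definition inv_letter (x : letter) : letter := (fst x, negb (snd x)).
Definition inv_word (w : word) : word := rev (map inv_letter w).

Definition red_step (x : letter) (acc : word) : word :=
  match acc with
  | y :: t => if letter_eqb y (inv_letter x) then t else x :: acc
  | [] => [x]
  end.
Definition red (w : word) : word := fold_right red_step [] w.

Definition subst (w1 w2 : word) (w : word) : word :=
  flat_map (fun l : letter => match l with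
              | (Ga, false) => w1 | (Ga, true) => inv_word w1
              | (Gb, false) => w2 | (Gb, true) => inv_word w2 end) w.

Definition is_free_basis (w1 w2 : word) : Prop :=
  exists u1 u2 : word,
    red (subst w1 w2 u1) = [(Ga, false)] /\ red (subst w1 w2 u2) = [(Gb, false)] /\
    red (subst u1 u2 w1) = [(Ga, false)] /\ red (subst u1 u2 w2) = [(Gb, false)].

(* exponent sum of a generator: the abelianisation H_1 = Z^2 *)
Definition expsum (g : gen) (w : word) : Z :=
  fold_right (fun (l : letter) (acc : Z) => if gen_eqb (fst l) g
                           then ((if snd l then -1 else 1) + acc)%Z else acc) 0%Z w.
Definition basis_det (w1 w2 : word) : Z :=
  (expsum Ga w1 * expsum Gb w2 - expsum Gb w1 * expsum Ga w2)%Z.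
(* orientation of H: o = true means (a,b) is positively oriented;
   a basis is positively oriented iff its change-of-basis determinant on H_1
   is +1 (o = true) resp. -1 (o = false) relative to (a,b). *)
Definition pos_oriented (o : bool) (w1 w2 : word) : Prop :=
  basis_det w1 w2 = (if o then 1 else -1)%Z.

Definition comm_word (w1 w2 : word) : word :=
  w1 ++ w2 ++ inv_word w1 ++ inv_word w2.

(** * The representation rho, given by SL_2 lifts A = rho(a), B = rho(b). *)
Definition eval_letter (A B : mat2) (l : letter) : mat2 :=
  match l with
  | (Ga, false) => A | (Ga, true) => minv A
  | (Gb, false) => B | (Gb, true) => minv B end.
Definition eval (A B : mat2) (w : word) : mat2 :=
  fold_right (fun l M => mmul (eval_letter A B l) M) mid w.

(* preimage in SL_2(R) of the image rho(pi_1) in PSL_2(R) *)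
Definition image (A B : mat2) (M : mat2) : Prop :=
  exists w, M = eval A B w \/ M = mneg (eval A B w).

(* rho(pi_1) contains an abelian subgroup of finite index (in PSL_2 R);
   subgroups of PSL_2 R are encoded by their (sign-closed) preimages S. *)
Definition virtually_abelian (A B : mat2) : Prop :=
  exists S : mat2 -> Prop,
    (forall M, S M -> image A B M) /\
    S mid /\
    (forall M, S M -> S (mneg M)) /\
    (forall M N, S M -> S N -> S (mmul M N)) /\
    (forall M, S M -> S (minv M)) /\
    (forall M N, S M -> S N -> mmul M N = mmul N M \/ mmul M N = mneg (mmul N M)) /\
    (exists L : list mat2, (forall l, In l L -> image A B l) /\
       forall M, image A B M -> exists l, In l L /\ S (mmul (minv l) M)).

(** * Hyperbolic plane: upper half-plane model, points (x,y) with y > 0. *)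
Definition point := (R * R)%type.
Definition inH (p : point) : Prop := 0 < snd p.

(* Moebius action z |-> (az+b)/(cz+d) *)
Definition moeb (M : mat2) (p : point) : point :=
  let x := fst p in let y := snd p in
  let D := (mc M * x + md M)^2 + (mc M * y)^2 in
  ((ma M * mc M * (x^2 + y^2) + (ma M * md M + mb M * mc M) * x + mb M * md M) / D,
   mdet M * y / D).

Definition arcosh (t : R) : R := ln (t + sqrt (t * t - 1)).
Definition hdist (p q : point) : R :=
  arcosh (1 + ((fst p - fst q)^2 + (snd p - snd q)^2) / (2 * snd p * snd q)).

(* axis of a hyperbolic M: the geodesic joining its two fixed points r1,r2 on
   the boundary, i.e. the solutions in H of c(x^2+y^2) + (d-a)x - b = 0
   (semicircle over [r1,r2], or vertical line over the finite fixed point). *)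
Definition axis (M : mat2) (p : point) : Prop :=
  inH p /\ mc M * (fst p ^ 2 + snd p ^ 2) + (md M - ma M) * fst p - mb M = 0.

Definition hseg (u v z : point) : Prop :=
  inH z /\ hdist u z + hdist z v = hdist u v.

Definition pentagon (g h : mat2) (p : point) : list point :=
  [ p;
    moeb (mmul (minv g) (mmul (minv h) (mmul g h))) p;  (* [g^-1,h^-1] p *)
    moeb h p;
    moeb (mmul g h) p;
    moeb (mmul (minv h) (mmul g h)) p ].

Definition vtx (P : list point) (i : nat) : point := nth (i mod 5) P (0, 1).

Definition nondegenerate (P : list point) : Prop :=
  forall i j, (i < 5)%nat -> (j < 5)%nat -> i <> j -> vtx P i <> vtx P j.

(* the closed geodesic polygon is a simple closed curve (bounds an embedded disc):
   distinct edges meet only in their common vertex when adjacent *)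
Definition simple_polygon (P : list point) : Prop :=
  forall i j z, (i < 5)%nat -> (j < 5)%nat -> i <> j ->
    hseg (vtx P i) (vtx P (S i)) z -> hseg (vtx P j) (vtx P (S j)) z ->
    (j = (S i) mod 5 /\ z = vtx P j) \/ (i = (S j) mod 5 /\ z = vtx P i).

(* Klein model coordinates (Cayley transform then Poincare -> Klein; both
   orientation preserving); geodesics are straight segments there. *)
Definition klein (p : point) : point :=
  let x := fst p in let y := snd p in
  let n := x ^ 2 + (y + 1) ^ 2 in
  let wx := (x ^ 2 + y ^ 2 - 1) / n in
  let wy := (- 2 * x) / n in
  let s := 1 + wx ^ 2 + wy ^ 2 in
  (2 * wx / s, 2 * wy / s).

Definition signed_area2 (P : list point) : R :=
  fold_right Rplus 0
    (map (fun i => let u := klein (vtx P i) in let v := klein (vtx P (S i)) in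
                   fst u * snd v - fst v * snd u) (seq 0 5)).

(* s = true: counterclockwise (positive w.r.t. the standard orientation of H^2) *)
Definition has_orientation (s : bool) (P : list point) : Prop :=
  if s then 0 < signed_area2 P else signed_area2 P < 0.

(* rho is eps-good for the orientation of H given by o, the pentagon being
   required to have orientation s *)
Definition eps_good (A B : mat2) (o s : bool) (eps : R) : Prop :=
  exists (w1 w2 : word) (p : point),
    is_free_basis w1 w2 /\ pos_oriented o w1 w2 /\
    let g := eval A B w1 in let h := eval A B w2 in
    let C := eval A B (comm_word w1 w2) in
    2 < Rabs (mtr C) /\ inH p /\
    (exists z, axis C z /\ hdist p z < eps) /\
    nondegenerate (pentagon g h p) /\ simple_polygon (pentagon g h p) /\
    has_orientation s (pentagon g h p).

Definition eps_bad (A B : mat2) (o s : bool) (eps : R) : Prop := ~ eps_good A B o s eps.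

(* Suppose rho is eps-good, witnessed by a basis with images g, h and a point p.
   The commutator C = [g, h] is hyperbolic.  A power of C and a power of g C g^-1
   lie in the abelian subgroup of finite index, hence commute in PSL_2(R); so
   they have the same axis, and g (likewise h) preserves the axis of C.
   Conjugating that axis to the imaginary axis, g and h become dilations
   z |-> k^2 z or half-turns z |-> -b^2/z, not both dilations as [g, h] <> 1.
   These maps preserve the pair of hypercycles through p at equal distance from
   the axis, which is an ellipse in the Klein model, so the five vertices of the
   pentagon lie on a convex curve.  Their order along it shows that two
   non-adjacent edges cross, so the pentagon does not bound an embedded disc. *)

From Stdlib Require Import Reals List Lra Lia Psatz Classical.
Import ListNotations.
Open Scope R_scope.

Lemma pow2_pos x : x <> 0 -> 0 < x ^ 2.
Proof. intro. rewrite <- Rsqr_pow2. apply Rsqr_pos_lt. assumption. Qed.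

(** * Matrix algebra *)

Ltac mat2_ring := repeat match goal with M : mat2 |- _ => destruct M end;
  unfold mmul, minv, mneg, mid, mdet, mtr in *; simpl in *;
  try match goal with |- @eq mat2 _ _ => f_equal end; ring.

Lemma mmul_assoc M N P : mmul M (mmul N P) = mmul (mmul M N) P. Proof. mat2_ring. Qed.
Lemma mmul_id_l M : mmul mid M = M. Proof. mat2_ring. Qed.
Lemma mmul_id_r M : mmul M mid = M. Proof. mat2_ring. Qed.
Lemma mmul_mneg_l M N : mmul (mneg M) N = mneg (mmul M N). Proof. mat2_ring. Qed.
Lemma mmul_mneg_r M N : mmul M (mneg N) = mneg (mmul M N). Proof. mat2_ring. Qed.
Lemma mneg_mneg M : mneg (mneg M) = M. Proof. mat2_ring. Qed.
Lemma minv_mmul M N : minv (mmul M N) = mmul (minv N) (minv M). Proof. mat2_ring. Qed.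
Lemma minv_minv M : minv (minv M) = M. Proof. mat2_ring. Qed.
Lemma minv_mneg M : minv (mneg M) = mneg (minv M). Proof. mat2_ring. Qed.
Lemma minv_mid : minv mid = mid. Proof. mat2_ring. Qed.

Lemma mdet_mmul M N : mdet (mmul M N) = mdet M * mdet N. Proof. mat2_ring. Qed.
Lemma mdet_minv M : mdet (minv M) = mdet M. Proof. mat2_ring. Qed.
Lemma mdet_mneg M : mdet (mneg M) = mdet M. Proof. mat2_ring. Qed.
Lemma mdet_mid : mdet mid = 1. Proof. mat2_ring. Qed.

Lemma mmul_minv_r M : mdet M = 1 -> mmul M (minv M) = mid.
Proof. destruct M; unfold mdet, mmul, minv, mid; simpl; intro; f_equal; lra. Qed.
Lemma mmul_minv_l M : mdet M = 1 -> mmul (minv M) M = mid.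
Proof. destruct M; unfold mdet, mmul, minv, mid; simpl; intro; f_equal; lra. Qed.

Definition mconj (M X : mat2) : mat2 := mmul M (mmul X (minv M)).

Lemma mtr_mconj M X : mdet M = 1 -> mtr (mconj M X) = mtr X.
Proof.
  intro HM. transitivity (mdet M * mtr X); [unfold mconj; mat2_ring | rewrite HM; ring].
Qed.
Lemma mdet_mconj M X : mdet M = 1 -> mdet (mconj M X) = mdet X.
Proof. intro HM. unfold mconj. rewrite !mdet_mmul, mdet_minv, HM. ring. Qed.
Lemma mconj_mmul M X Y : mdet M = 1 -> mconj M (mmul X Y) = mmul (mconj M X) (mconj M Y).
Proof.
  intro HM. unfold mconj. rewrite !mmul_assoc. f_equal.
  rewrite <- !mmul_assoc, (mmul_assoc (minv M) M), mmul_minv_l, mmul_id_l by exact HM.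
  reflexivity.
Qed.
Lemma mconj_minv M X : mconj M (minv X) = minv (mconj M X).
Proof. unfold mconj. rewrite !minv_mmul, minv_minv, mmul_assoc. reflexivity. Qed.
Lemma mconj_mneg M X : mconj M (mneg X) = mneg (mconj M X).
Proof. unfold mconj. rewrite mmul_mneg_l, mmul_mneg_r. reflexivity. Qed.
Lemma mconj_mid M : mdet M = 1 -> mconj M mid = mid.
Proof. intro HM. unfold mconj. rewrite mmul_id_l, mmul_minv_r; auto. Qed.
Lemma mconj_mconj M x D : mdet M = 1 ->
  mconj M (mconj x D) = mconj (mconj M x) (mconj M D).
Proof. intro HM. unfold mconj at 2 4. rewrite !mconj_mmul, mconj_minv; auto. Qed.

Definition mcomm (g h : mat2) : mat2 := mmul g (mmul h (mmul (minv g) (minv h))).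

Lemma mconj_mcomm M g h : mdet M = 1 -> mconj M (mcomm g h) = mcomm (mconj M g) (mconj M h).
Proof. intro HM. unfold mcomm. rewrite !mconj_mmul, !mconj_minv by exact HM. reflexivity. Qed.

(* commutation in PSL_2(R) *)
Definition pcommute (M N : mat2) : Prop :=
  mmul M N = mmul N M \/ mmul M N = mneg (mmul N M).

Lemma pcommute_mconj M X Y : mdet M = 1 -> pcommute X Y -> pcommute (mconj M X) (mconj M Y).
Proof.
  intros HM [E | E]; [left | right]; rewrite <- !mconj_mmul, E by exact HM;
    rewrite ?mconj_mneg; reflexivity.
Qed.

Fixpoint mpow (M : mat2) (n : nat) : mat2 :=
  match n with O => mid | S k => mmul M (mpow M k) end.

Lemma mpow_add M m n : mpow M (m + n) = mmul (mpow M m) (mpow M n).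
Proof. induction m; simpl; [rewrite mmul_id_l | rewrite IHm, mmul_assoc]; reflexivity. Qed.
Lemma mpow_mul M m n : mpow (mpow M m) n = mpow M (m * n).
Proof.
  induction n; simpl; [rewrite Nat.mul_0_r; reflexivity|].
  rewrite IHn, <- mpow_add. f_equal. lia.
Qed.
Lemma mdet_mpow M n : mdet M = 1 -> mdet (mpow M n) = 1.
Proof. intro HM. induction n; simpl; [apply mdet_mid | rewrite mdet_mmul, HM, IHn; ring]. Qed.
Lemma mconj_mpow M X n : mdet M = 1 -> mconj M (mpow X n) = mpow (mconj M X) n.
Proof. intro HM. induction n; simpl; [|rewrite mconj_mmul, IHn]; auto using mconj_mid. Qed.
Lemma mpow_diag e f n : mpow (M2 e 0 0 f) n = M2 (e ^ n) 0 0 (f ^ n).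
Proof. induction n; simpl; [reflexivity|]. rewrite IHn. unfold mmul; simpl; f_equal; ring. Qed.
Lemma minv_mpow_mmul_mpow M i j : mdet M = 1 -> (i <= j)%nat ->
  mmul (minv (mpow M i)) (mpow M j) = mpow M (j - i).
Proof.
  intros HM Hij. replace j with (i + (j - i))%nat at 1 by lia.
  rewrite mpow_add, mmul_assoc, mmul_minv_l, mmul_id_l; auto using mdet_mpow.
Qed.

(** * The representation *)

Lemma eval_app A B w1 w2 : eval A B (w1 ++ w2) = mmul (eval A B w1) (eval A B w2).
Proof.
  induction w1 as [|l w IH]; simpl; [rewrite mmul_id_l | rewrite IH, mmul_assoc]; reflexivity.
Qed.

Lemma eval_inv_word A B w : eval A B (inv_word w) = minv (eval A B w).
Proof.
  unfold inv_word. induction w as [|l w IH]; [symmetry; apply minv_mid|].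
  simpl map. simpl rev. rewrite eval_app, IH. simpl eval.
  rewrite minv_mmul, mmul_id_r. f_equal.
  destruct l as [[|] [|]]; simpl; rewrite ?minv_minv; reflexivity.
Qed.

Lemma eval_comm_word A B w1 w2 :
  eval A B (comm_word w1 w2) = mcomm (eval A B w1) (eval A B w2).
Proof. unfold comm_word. rewrite !eval_app, !eval_inv_word. reflexivity. Qed.

Lemma mdet_eval A B w : mdet A = 1 -> mdet B = 1 -> mdet (eval A B w) = 1.
Proof.
  intros HA HB. induction w as [|[[|] [|]] w IH]; simpl;
    rewrite ?mdet_mmul, ?mdet_minv, ?IH, ?HA, ?HB; try apply mdet_mid; ring.
Qed.

Lemma image_eval A B w : image A B (eval A B w). Proof. exists w; left; reflexivity. Qed.
Lemma image_mid A B : image A B mid. Proof. apply (image_eval A B []). Qed.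
Lemma image_mmul A B M N : image A B M -> image A B N -> image A B (mmul M N).
Proof.
  intros [w1 E1] [w2 E2]. exists (w1 ++ w2). rewrite eval_app.
  destruct E1 as [-> | ->], E2 as [-> | ->];
    rewrite ?mmul_mneg_l, ?mmul_mneg_r, ?mneg_mneg; auto.
Qed.
Lemma image_minv A B M : image A B M -> image A B (minv M).
Proof.
  intros [w E]. exists (inv_word w). rewrite eval_inv_word.
  destruct E as [-> | ->]; rewrite ?minv_mneg; auto.
Qed.
Lemma image_mpow A B M n : image A B M -> image A B (mpow M n).
Proof. intro H. induction n; simpl; auto using image_mid, image_mmul. Qed.
Lemma image_mconj A B M X : image A B M -> image A B X -> image A B (mconj M X).
Proof. intros. unfold mconj. auto using image_mmul, image_minv. Qed.
Lemma mdet_image A B M : mdet A = 1 -> mdet B = 1 -> image A B M -> mdet M = 1.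
Proof. intros HA HB [w [-> | ->]]; rewrite ?mdet_mneg; apply mdet_eval; auto. Qed.

(** * Virtually abelian representations *)

Lemma infinite_pigeonhole {T : Type} (L : list T) (P : nat -> T -> Prop) :
  (forall i, exists l, In l L /\ P i l) -> exists i j l, (i < j)%nat /\ P i l /\ P j l.
Proof.
  revert P; induction L as [|a L IH]; intros P H.
  - destruct (H 0%nat) as [l [[] _]].
  - destruct (classic (exists i j, (i < j)%nat /\ P i a /\ P j a)) as [(i & j & ?) | Hno];
      [exists i, j, a; assumption|].
    destruct (classic (exists i0, P i0 a)) as [[i0 Hi0] | Hnone].
    + destruct (IH (fun i l => P (S i0 + i)%nat l)) as (i & j & l & Hij & Hi & Hj).
      { intro i. destruct (H (S i0 + i)%nat) as (l & [<- | Hl] & Pl); [|eauto].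
        exfalso. apply Hno. exists i0, (S i0 + i)%nat. split; [lia | auto]. }
      exists (S i0 + i)%nat, (S i0 + j)%nat, l. split; [lia | auto].
    + apply IH. intro i. destruct (H i) as (l & [<- | Hl] & Pl); [|eauto].
      exfalso. apply Hnone. eauto.
Qed.

(* Some two of the powers y^i lie in the same coset of the finite-index subgroup. *)
Lemma virtually_abelian_powers A B : mdet A = 1 -> mdet B = 1 -> virtually_abelian A B ->
  exists S : mat2 -> Prop,
    (forall M N, S M -> S N -> pcommute M N) /\
    (forall M n, S M -> S (mpow M n)) /\
    (forall M, image A B M -> exists n, (0 < n)%nat /\ S (mpow M n)).
Proof.
  intros HA HB (S & _ & Sid & _ & Smul & Sinv & Scomm & L & Limg & Lcos).
  exists S. split; [exact Scomm|]. split.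
  { intros M n SM. induction n; simpl; auto. }
  intros y Hy.
  destruct (infinite_pigeonhole L (fun i l => In l L /\ S (mmul (minv l) (mpow y i))))
    as (i & j & l & Hij & [Hl Si] & [_ Sj]).
  { intro i. destruct (Lcos _ (image_mpow A B y i Hy)) as (l & ? & ?). eauto. }
  assert (dl : mdet l = 1) by eauto using mdet_image.
  assert (dy : mdet y = 1) by eauto using mdet_image.
  exists (j - i)%nat. split; [lia|].
  rewrite <- minv_mpow_mmul_mpow by (auto; lia).
  replace (mmul (minv (mpow y i)) (mpow y j))
    with (mmul (minv (mmul (minv l) (mpow y i))) (mmul (minv l) (mpow y j))); auto.
  rewrite minv_mmul, minv_minv, <- mmul_assoc, (mmul_assoc l), mmul_minv_r, mmul_id_l; auto.
Qed.

Definition is_diag (M : mat2) : Prop := mb M = 0 /\ mc M = 0.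
Definition is_antidiag (M : mat2) : Prop := ma M = 0 /\ md M = 0.

Lemma hyperbolic_eigenvalue_Rabs_neq_1 e f : e * f = 1 -> 2 < Rabs (e + f) -> Rabs e <> 1.
Proof.
  intros Hef Htr He. assert (f = e) by (unfold Rabs in He; destruct Rcase_abs; nra).
  subst. unfold Rabs in *. repeat destruct Rcase_abs; lra.
Qed.

Lemma Rabs_pow_neq_1 e n : Rabs e <> 1 -> (0 < n)%nat -> Rabs (e ^ n) <> 1.
Proof.
  intros He Hn. rewrite <- RPow_abs. destruct (Rlt_or_le 1 (Rabs e)).
  - assert (1 < Rabs e ^ n) by (apply Rlt_pow_R1; auto). lra.
  - assert (Rabs e ^ n < 1) by (apply pow_lt_1_compat; [split; auto using Rabs_pos; lra | lia]).
    lra.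
Qed.

Lemma mconj_diag_offdiag x e f :
  mb (mconj x (M2 e 0 0 f)) = ma x * mb x * (f - e) /\
  mc (mconj x (M2 e 0 0 f)) = mc x * md x * (e - f).
Proof. destruct x; unfold mconj, mmul, minv; simpl; split; ring. Qed.

Lemma commute_diag_offdiag e f Y : e <> f -> mmul (M2 e 0 0 f) Y = mmul Y (M2 e 0 0 f) ->
  mb Y = 0 /\ mc Y = 0.
Proof.
  destruct Y as [a b c d]; unfold mmul; simpl; intros Hef E; injection E; intros.
  split; apply (Rmult_eq_reg_l (e - f)); lra || nra.
Qed.

Lemma anticommute_diag_mtr e f Y : e <> 0 -> f <> 0 ->
  mmul (M2 e 0 0 f) Y = mneg (mmul Y (M2 e 0 0 f)) -> mtr Y = 0.
Proof.
  destruct Y as [a b c d]; unfold mmul, mneg, mtr; simpl; intros He Hf E; injection E; intros.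
  assert (a = 0) by (apply (Rmult_eq_reg_l (2 * e)); lra).
  assert (d = 0) by (apply (Rmult_eq_reg_l (2 * f)); lra).
  lra.
Qed.

Lemma diag_or_antidiag_of_mdet x : mdet x = 1 -> ma x * mb x = 0 -> mc x * md x = 0 ->
  is_diag x \/ is_antidiag x.
Proof.
  destruct x as [p q r s]; unfold mdet, is_diag, is_antidiag; simpl; intros Hx Hpq Hrs.
  destruct (Req_dec p 0) as [Hp | Hp].
  - right. split; [exact Hp|]. subst. assert (r <> 0) by (intro; subst; lra). nra.
  - left. assert (q = 0) by nra. subst. assert (s <> 0) by (intro; subst; lra). split; nra.
Qed.

(* If x D x^-1 commutes with D in PSL_2(R), then x preserves the fixed-point
   set {0, oo} of the hyperbolic diagonal matrix D. *)
Lemma pcommute_diag_mconj x e f : mdet x = 1 -> e * f = 1 -> Rabs e <> 1 ->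
  pcommute (M2 e 0 0 f) (mconj x (M2 e 0 0 f)) -> is_diag x \/ is_antidiag x.
Proof.
  intros Hx Hef He [E | E].
  - assert (Hne : e <> f).
    { intro; subst. apply He. unfold Rabs. destruct Rcase_abs; nra. }
    destruct (commute_diag_offdiag _ _ _ Hne E) as [Hb Hc].
    destruct (mconj_diag_offdiag x e f) as [Eb Ec].
    apply diag_or_antidiag_of_mdet; [exact Hx | |];
      apply (Rmult_eq_reg_r (f - e)); try lra; nra.
  - exfalso. assert (Ht := anticommute_diag_mtr e f _ ltac:(nra) ltac:(nra) E).
    rewrite mtr_mconj in Ht by exact Hx. unfold mtr in Ht; simpl in Ht.
    assert (f = - e) by lra. subst. nra.
Qed.

Lemma mconj_minv_eigenbasis C P e f : mdet P = 1 -> mmul C P = mmul P (M2 e 0 0 f) ->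
  mdet (minv P) = 1 /\ is_diag (mconj (minv P) C).
Proof.
  intros HP E. split; [rewrite mdet_minv; exact HP|].
  unfold mconj. rewrite minv_minv, E, mmul_assoc, mmul_minv_l, mmul_id_l by exact HP.
  split; reflexivity.
Qed.

Lemma hyperbolic_diagonalizable C : mdet C = 1 -> 2 < Rabs (mtr C) ->
  exists M, mdet M = 1 /\ is_diag (mconj M C).
Proof.
  destruct C as [p q r s]. unfold mdet, mtr; simpl. intros Hd Ht.
  assert (T4 : 4 < (p + s) * (p + s)) by (unfold Rabs in Ht; destruct Rcase_abs; nra).
  destruct (Req_dec q 0) as [-> | Hq].
  - assert (Hps : p - s <> 0) by (intro; assert (s = p) by lra; subst; nra).
    exists (minv (M2 1 0 (r / (p - s)) 1)). apply (mconj_minv_eigenbasis _ _ p s).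
    + unfold mdet; simpl; ring.
    + unfold mmul; simpl. f_equal; field; exact Hps.
  - set (t := p + s) in *.
    assert (HD := sqrt_sqrt (t * t - 4) ltac:(lra)).
    assert (PD := sqrt_lt_R0 (t * t - 4) ltac:(lra)).
    revert HD PD. generalize (sqrt (t * t - 4)). intros D HD PD.
    (* eigenvalues m1, m2 and eigenvectors (q, m1 - p), (q, m2 - p) of C *)
    set (m1 := (t + D) / 2). set (m2 := (t - D) / 2). set (k := - q * D).
    assert (Hk : k <> 0) by (unfold k; intro E; apply Rmult_integral in E; lra).
    assert (Z1 : m1 * m1 - t * m1 + 1 = 0) by (unfold m1; nra).
    assert (Z2 : m2 * m2 - t * m2 + 1 = 0) by (unfold m2; nra).
    exists (minv (M2 (q / k) q ((m1 - p) / k) (m2 - p))). apply (mconj_minv_eigenbasis _ _ m1 m2).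
    + unfold mdet; simpl. unfold m1, m2, k. field. lra.
    + unfold mmul; simpl. unfold t in *. f_equal.
      * field. exact Hk.
      * ring.
      * field_simplify_eq; [nra | exact Hk].
      * nra.
Qed.

Lemma virtually_abelian_diag_or_antidiag A B M C x :
  mdet A = 1 -> mdet B = 1 -> virtually_abelian A B ->
  image A B C -> 2 < Rabs (mtr C) -> mdet M = 1 -> is_diag (mconj M C) ->
  image A B x -> is_diag (mconj M x) \/ is_antidiag (mconj M x).
Proof.
  intros HA HB VA IC Htr HM [Cb Cc] Ix.
  destruct (virtually_abelian_powers A B HA HB VA) as (S & Scomm & Spow & Sroot).
  assert (dx : mdet x = 1) by eauto using mdet_image.
  assert (dC : mdet C = 1) by eauto using mdet_image.
  assert (EC : mconj M C = M2 (ma (mconj M C)) 0 0 (md (mconj M C)))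
    by (destruct (mconj M C); simpl in *; subst; reflexivity).
  set (e := ma (mconj M C)) in *. set (f := md (mconj M C)) in *.
  assert (Hef : e * f = 1).
  { rewrite <- dC, <- (mdet_mconj M C HM), EC. unfold mdet; simpl; ring. }
  assert (He : Rabs e <> 1).
  { apply hyperbolic_eigenvalue_Rabs_neq_1 with f; [exact Hef|].
    rewrite <- (mtr_mconj M C HM), EC in Htr. exact Htr. }
  (* D := C^(n1 n2) and x D x^-1 both lie in the abelian subgroup *)
  destruct (Sroot C IC) as (n1 & Hn1 & S1).
  destruct (Sroot (mconj x (mpow C n1))) as (n2 & Hn2 & S2);
    [apply image_mconj, image_mpow; assumption|].
  rewrite <- mconj_mpow, mpow_mul in S2 by exact dx.
  assert (Hc := pcommute_mconj M _ _ HM (Scomm _ _ (Spow _ n2 S1) S2)).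
  rewrite mpow_mul, mconj_mconj, mconj_mpow, EC, mpow_diag in Hc by exact HM.
  apply (pcommute_diag_mconj _ (e ^ (n1 * n2)) (f ^ (n1 * n2))); [rewrite mdet_mconj; auto | | |].
  - rewrite <- Rpow_mult_distr, Hef. apply pow1.
  - apply Rabs_pow_neq_1; [exact He | lia].
  - exact Hc.
Qed.

(** * The Moebius action *)

Definition moeb_den (M : mat2) (p : point) : R := (mc M * fst p + md M) ^ 2 + (mc M * snd p) ^ 2.

Lemma moeb_den_pos M p : mdet M <> 0 -> inH p -> 0 < moeb_den M p.
Proof.
  destruct M as [a b c d], p as [x y]; unfold moeb_den, mdet, inH; simpl; intros H Hy.
  destruct (Req_dec c 0) as [-> | Hc].
  - assert (Hd : d <> 0) by (intro; subst; apply H; ring).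
    replace ((0 * x + d) ^ 2 + (0 * y) ^ 2) with (d * d) by ring.
    destruct (Rdichotomy _ _ Hd); nra.
  - assert (0 < c * c) by (destruct (Rdichotomy _ _ Hc); nra).
    assert (0 <= (c * x + d) ^ 2) by apply pow2_ge_0.
    replace ((c * y) ^ 2) with (c * c * (y * y)) by ring.
    assert (0 < c * c * (y * y)) by (apply Rmult_lt_0_compat; nra). lra.
Qed.

Lemma moeb_snd M p : snd (moeb M p) = mdet M * snd p / moeb_den M p.
Proof. destruct p; reflexivity. Qed.

Lemma inH_moeb M p : mdet M = 1 -> inH p -> inH (moeb M p).
Proof.
  intros HM Hp. assert (D := moeb_den_pos M p ltac:(lra) Hp).
  unfold inH in *. rewrite moeb_snd, HM. apply Rdiv_lt_0_compat; lra.
Qed.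

Lemma moeb_den_moeb M N p : moeb_den N p <> 0 ->
  moeb_den M (moeb N p) = moeb_den (mmul M N) p / moeb_den N p.
Proof.
  destruct M as [a b c d], N as [e f g h], p as [x y]; unfold moeb_den, moeb, mdet, mmul; simpl.
  intro D. field. intro E. apply D. rewrite <- E. ring.
Qed.

Lemma moeb_mmul M N p : mdet M = 1 -> mdet N = 1 -> inH p ->
  moeb (mmul M N) p = moeb M (moeb N p).
Proof.
  intros HM HN Hp.
  assert (D1 := moeb_den_pos N p ltac:(lra) Hp).
  assert (D2 := moeb_den_pos (mmul M N) p ltac:(rewrite mdet_mmul, HM, HN; lra) Hp).
  unfold moeb at 2. fold (moeb_den M (moeb N p)). rewrite moeb_den_moeb by lra.
  revert D1 D2. clear HM HN Hp.
  destruct M as [a b c d], N as [e f g h], p as [x y]; unfold moeb_den, moeb, mdet, mmul; simpl.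
  rewrite !Rmult_1_r. intros D1 D2. f_equal; field; split; lra.
Qed.

Lemma moeb_mid p : moeb mid p = p.
Proof. destruct p as [x y]; unfold moeb, mid, mdet; simpl; f_equal; field. Qed.

Lemma moeb_minv_moeb M p : mdet M = 1 -> inH p -> moeb (minv M) (moeb M p) = p.
Proof.
  intros HM Hp. rewrite <- moeb_mmul, mmul_minv_l, moeb_mid; rewrite ?mdet_minv; auto.
Qed.

Lemma moeb_dist2 M u v : moeb_den M u <> 0 -> moeb_den M v <> 0 ->
  (fst (moeb M u) - fst (moeb M v)) ^ 2 + (snd (moeb M u) - snd (moeb M v)) ^ 2 =
  mdet M ^ 2 * ((fst u - fst v) ^ 2 + (snd u - snd v) ^ 2) / (moeb_den M u * moeb_den M v).
Proof.
  destruct M as [a b c d], u as [x y], v as [x' y']; unfold moeb_den, moeb, mdet; simpl.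
  rewrite !Rmult_1_r. intros Du Dv. field. split; assumption.
Qed.

Lemma hdist_moeb M u v : mdet M = 1 -> inH u -> inH v ->
  hdist (moeb M u) (moeb M v) = hdist u v.
Proof.
  intros HM Hu Hv. unfold hdist. f_equal.
  assert (Du := moeb_den_pos M u ltac:(lra) Hu). assert (Dv := moeb_den_pos M v ltac:(lra) Hv).
  rewrite moeb_dist2, !moeb_snd, HM by lra. unfold inH in *. field. repeat split; lra.
Qed.

Lemma hseg_moeb M u v z : mdet M = 1 -> inH u -> inH v -> hseg u v z ->
  hseg (moeb M u) (moeb M v) (moeb M z).
Proof.
  intros HM Hu Hv [Hz E]. split; [apply inH_moeb; auto|]. rewrite !hdist_moeb; auto.
Qed.

(** * Geodesic segments in the Klein model *)

Lemma norm2_pos (p : point) : 0 < fst p ^ 2 + snd p ^ 2 + 1.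
Proof. generalize (pow2_ge_0 (fst p)) (pow2_ge_0 (snd p)); lra. Qed.

Lemma klein_eq p : inH p ->
  klein p = ((fst p ^ 2 + snd p ^ 2 - 1) / (fst p ^ 2 + snd p ^ 2 + 1),
             - 2 * fst p / (fst p ^ 2 + snd p ^ 2 + 1)).
Proof.
  intro Hp. assert (N := norm2_pos p).
  destruct p as [x y]; unfold klein, inH in *; simpl in *.
  assert (0 < x ^ 2 + (y + 1) ^ 2) by (generalize (pow2_ge_0 x); nra).
  f_equal; field; repeat split; try lra; nra.
Qed.

Definition klein_scale (p : point) : R := 2 * snd p / (fst p ^ 2 + snd p ^ 2 + 1).

Lemma klein_scale_pos p : inH p -> 0 < klein_scale p.
Proof. intro Hp. apply Rdiv_lt_0_compat; [unfold inH in Hp; lra | apply norm2_pos]. Qed.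

Lemma klein_scale_sq p : inH p ->
  klein_scale p ^ 2 = 1 - (fst (klein p) * fst (klein p) + snd (klein p) * snd (klein p)).
Proof.
  intro Hp. rewrite klein_eq by exact Hp. assert (N := norm2_pos p).
  destruct p as [x y]; unfold klein_scale; simpl in *. field. lra.
Qed.

Lemma klein_in_disk p : inH p ->
  fst (klein p) * fst (klein p) + snd (klein p) * snd (klein p) < 1.
Proof.
  intro Hp. generalize (klein_scale_sq p Hp) (klein_scale_pos p Hp). intros E P.
  assert (0 < klein_scale p ^ 2) by (apply pow_lt; lra). lra.
Qed.

Lemma hdist_klein u v : inH u -> inH v -> hdist u v =
  arcosh ((1 - (fst (klein u) * fst (klein v) + snd (klein u) * snd (klein v)))
          / (klein_scale u * klein_scale v)).
Proof.
  intros Hu Hv. unfold hdist. rewrite !klein_eq by assumption. f_equal.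
  assert (N1 := norm2_pos u). assert (N2 := norm2_pos v).
  destruct u as [x y], v as [x' y']; unfold klein_scale, inH in *; simpl in *.
  field. repeat split; lra.
Qed.

Lemma klein_surj Z1 Z2 : Z1 * Z1 + Z2 * Z2 < 1 -> exists z, inH z /\ klein z = (Z1, Z2).
Proof.
  intro H. assert (HZ1 : Z1 < 1) by nra.
  assert (HS := sqrt_sqrt (1 - Z1 * Z1 - Z2 * Z2) ltac:(lra)).
  assert (PS := sqrt_lt_R0 (1 - Z1 * Z1 - Z2 * Z2) ltac:(lra)).
  revert HS PS. generalize (sqrt (1 - Z1 * Z1 - Z2 * Z2)). intros s HS PS.
  assert (Hz : inH (- Z2 / (1 - Z1), s / (1 - Z1))) by (apply Rdiv_lt_0_compat; lra).
  exists (- Z2 / (1 - Z1), s / (1 - Z1)). split; [exact Hz|].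
  rewrite klein_eq by exact Hz. cbn [fst snd].
  assert (E : (- Z2 / (1 - Z1)) ^ 2 + (s / (1 - Z1)) ^ 2 = 2 / (1 - Z1) - 1).
  { field_simplify_eq; [|lra]. nra. }
  rewrite E. f_equal; field; lra.
Qed.

Lemma disk_convex P1 P2 Q1 Q2 t : 0 <= t <= 1 ->
  P1 * P1 + P2 * P2 < 1 -> Q1 * Q1 + Q2 * Q2 < 1 ->
  ((1 - t) * P1 + t * Q1) * ((1 - t) * P1 + t * Q1)
  + ((1 - t) * P2 + t * Q2) * ((1 - t) * P2 + t * Q2) < 1.
Proof.
  intros Ht HP HQ.
  assert (E : ((1 - t) * P1 + t * Q1) * ((1 - t) * P1 + t * Q1)
              + ((1 - t) * P2 + t * Q2) * ((1 - t) * P2 + t * Q2)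
            = (1 - t) * (P1 * P1 + P2 * P2) + t * (Q1 * Q1 + Q2 * Q2)
              - t * (1 - t) * ((P1 - Q1) ^ 2 + (P2 - Q2) ^ 2)) by ring.
  rewrite E. generalize (pow2_ge_0 (P1 - Q1)) (pow2_ge_0 (P2 - Q2)). intros.
  assert (0 <= t * (1 - t) * ((P1 - Q1) ^ 2 + (P2 - Q2) ^ 2))
    by (apply Rmult_le_pos; nra).
  assert ((1 - t) * (P1 * P1 + P2 * P2) + t * (Q1 * Q1 + Q2 * Q2) < 1)
    by (destruct (Req_dec t 1); [subst; lra | nra]).
  lra.
Qed.

Lemma arcosh_add a b : 1 <= a -> 1 <= b ->
  arcosh a + arcosh b = arcosh (a * b + sqrt (a * a - 1) * sqrt (b * b - 1)).
Proof.
  intros Ha Hb. unfold arcosh.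
  assert (SA := sqrt_sqrt (a * a - 1) ltac:(nra)). assert (PA := sqrt_pos (a * a - 1)).
  assert (SB := sqrt_sqrt (b * b - 1) ltac:(nra)). assert (PB := sqrt_pos (b * b - 1)).
  revert SA SB PA PB. generalize (sqrt (a * a - 1)) (sqrt (b * b - 1)). intros A B SA SB PA PB.
  rewrite <- ln_mult by nra. f_equal.
  assert (E : (a * b + A * B) * (a * b + A * B) - 1 = (a * B + b * A) * (a * B + b * A))
    by nra.
  rewrite E, sqrt_square by nra. ring.
Qed.

Lemma one_sub_dot_pos u1 u2 v1 v2 : u1 * u1 + u2 * u2 < 1 -> v1 * v1 + v2 * v2 < 1 ->
  0 < 1 - (u1 * v1 + u2 * v2).
Proof. intros. generalize (pow2_ge_0 (u1 - v1)) (pow2_ge_0 (u2 - v2)). nra. Qed.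

(* A quarter of the discriminant of the equation |u + l (v - u)|^2 = 1 in l. *)
Definition chord_disc (u1 u2 v1 v2 : R) : R :=
  (u1 - v1) ^ 2 + (u2 - v2) ^ 2 - (u1 * v2 - u2 * v1) ^ 2.

Lemma chord_disc_nonneg u1 u2 v1 v2 : u1 * u1 + u2 * u2 <= 1 -> 0 <= chord_disc u1 u2 v1 v2.
Proof.
  intro Hu. unfold chord_disc.
  (* Lagrange's identity for u and v - u *)
  assert (L : (u1 * u1 + u2 * u2) * ((v1 - u1) ^ 2 + (v2 - u2) ^ 2)
              = (u1 * (v1 - u1) + u2 * (v2 - u2)) ^ 2 + (u1 * v2 - u2 * v1) ^ 2) by ring.
  generalize (pow2_ge_0 (u1 * (v1 - u1) + u2 * (v2 - u2))) (pow2_ge_0 (v1 - u1))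
             (pow2_ge_0 (v2 - u2)). nra.
Qed.

Lemma klein_cosh_sq_sub1 u1 u2 v1 v2 su sv : su <> 0 -> sv <> 0 ->
  su ^ 2 = 1 - (u1 * u1 + u2 * u2) -> sv ^ 2 = 1 - (v1 * v1 + v2 * v2) ->
  ((1 - (u1 * v1 + u2 * v2)) / (su * sv)) ^ 2 - 1 = chord_disc u1 u2 v1 v2 / (su * sv) ^ 2.
Proof.
  intros Hu Hv Eu Ev.
  transitivity (((1 - (u1 * v1 + u2 * v2)) ^ 2 - su ^ 2 * sv ^ 2) / (su * sv) ^ 2);
    [field; auto|].
  rewrite Eu, Ev. unfold chord_disc. f_equal. ring.
Qed.

Lemma disk_of_sq_eq s u1 u2 : 0 < s -> s ^ 2 = 1 - (u1 * u1 + u2 * u2) -> u1 * u1 + u2 * u2 < 1.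
Proof. intros Hs E. assert (0 < s ^ 2) by (apply pow_lt; exact Hs). lra. Qed.

(* In the Klein model, cosh d(u, v) = (1 - u.v) / (su sv) with su = sqrt (1 - |u|^2). *)
Lemma klein_cosh_sqrt u1 u2 v1 v2 su sv w : 0 < su -> 0 < sv ->
  su ^ 2 = 1 - (u1 * u1 + u2 * u2) -> sv ^ 2 = 1 - (v1 * v1 + v2 * v2) ->
  0 <= w -> chord_disc u1 u2 v1 v2 = w ^ 2 ->
  let a := (1 - (u1 * v1 + u2 * v2)) / (su * sv) in 1 <= a /\ sqrt (a * a - 1) = w / (su * sv).
Proof.
  intros Pu Pv Eu Ev Pw Ew a.
  assert (Pa : 0 < a).
  { apply Rdiv_lt_0_compat; [apply one_sub_dot_pos | apply Rmult_lt_0_compat];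
      eauto using disk_of_sq_eq. }
  assert (Pw' : 0 <= w / (su * sv))
    by (apply Rmult_le_pos; [exact Pw | left; apply Rinv_0_lt_compat; nra]).
  assert (E : a * a - 1 = (w / (su * sv)) ^ 2).
  { replace (a * a) with (a ^ 2) by ring. unfold a.
    rewrite klein_cosh_sq_sub1, Ew by lra. field. lra. }
  rewrite E, sqrt_pow2 by exact Pw'. split; [|reflexivity].
  assert (0 <= (w / (su * sv)) ^ 2) by apply pow2_ge_0. nra.
Qed.

Lemma chord_disc_collinear u1 u2 v1 v2 t :
  chord_disc u1 u2 ((1 - t) * u1 + t * v1) ((1 - t) * u2 + t * v2)
  = t ^ 2 * chord_disc u1 u2 v1 v2 /\
  chord_disc ((1 - t) * u1 + t * v1) ((1 - t) * u2 + t * v2) v1 v2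
  = (1 - t) ^ 2 * chord_disc u1 u2 v1 v2.
Proof. unfold chord_disc. split; ring. Qed.

Lemma klein_dist_additive u1 u2 v1 v2 z1 z2 t su sv sz :
  0 <= t <= 1 -> z1 = (1 - t) * u1 + t * v1 -> z2 = (1 - t) * u2 + t * v2 ->
  0 < su -> 0 < sv -> 0 < sz ->
  su ^ 2 = 1 - (u1 * u1 + u2 * u2) -> sv ^ 2 = 1 - (v1 * v1 + v2 * v2) ->
  sz ^ 2 = 1 - (z1 * z1 + z2 * z2) ->
  arcosh ((1 - (u1 * z1 + u2 * z2)) / (su * sz)) + arcosh ((1 - (z1 * v1 + z2 * v2)) / (sz * sv))
  = arcosh ((1 - (u1 * v1 + u2 * v2)) / (su * sv)).
Proof.
  intros Ht Hz1 Hz2 Pu Pv Pz Eu Ev Ez.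
  assert (Hd := chord_disc_nonneg u1 u2 v1 v2 ltac:(apply Rlt_le; eauto using disk_of_sq_eq)).
  set (d := sqrt (chord_disc u1 u2 v1 v2)).
  assert (Hdd : d ^ 2 = chord_disc u1 u2 v1 v2) by (unfold d; rewrite pow2_sqrt; auto).
  assert (Pd : 0 <= d) by apply sqrt_pos.
  destruct (chord_disc_collinear u1 u2 v1 v2 t) as [Cuz Czv]. rewrite <- Hz1, <- Hz2 in Cuz, Czv.
  destruct (klein_cosh_sqrt u1 u2 z1 z2 su sz (t * d)) as [Ha Sa]; auto.
  { apply Rmult_le_pos; lra. }
  { rewrite Cuz, <- Hdd. ring. }
  destruct (klein_cosh_sqrt z1 z2 v1 v2 sz sv ((1 - t) * d)) as [Hb Sb]; auto.
  { apply Rmult_le_pos; lra. }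
  { rewrite Czv, <- Hdd. ring. }
  rewrite arcosh_add, Sa, Sb by assumption. f_equal.
  assert (I : (1 - (u1 * v1 + u2 * v2)) * sz ^ 2
              = (1 - (u1 * z1 + u2 * z2)) * (1 - (z1 * v1 + z2 * v2)) + t * (1 - t) * d ^ 2)
    by (rewrite Hdd, Ez; unfold chord_disc; subst; ring).
  transitivity ((1 - (u1 * v1 + u2 * v2)) * sz ^ 2 / (su * sz ^ 2 * sv)); [|field; lra].
  rewrite I. field. lra.
Qed.

Lemma hseg_of_klein_segment u v z t : inH u -> inH v -> inH z -> 0 <= t <= 1 ->
  fst (klein z) = (1 - t) * fst (klein u) + t * fst (klein v) ->
  snd (klein z) = (1 - t) * snd (klein u) + t * snd (klein v) -> hseg u v z.
Proof.
  intros Hu Hv Hz Ht E1 E2. split; [exact Hz|].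
  rewrite !hdist_klein by assumption.
  apply klein_dist_additive with t; auto using klein_scale_pos, klein_scale_sq.
Qed.

Lemma hseg_meet_of_klein_meet u0 u1 w0 w1 t s : inH u0 -> inH u1 -> inH w0 -> inH w1 ->
  0 <= t <= 1 -> 0 <= s <= 1 ->
  (1 - t) * fst (klein u0) + t * fst (klein u1) = (1 - s) * fst (klein w0) + s * fst (klein w1) ->
  (1 - t) * snd (klein u0) + t * snd (klein u1) = (1 - s) * snd (klein w0) + s * snd (klein w1) ->
  exists z, hseg u0 u1 z /\ hseg w0 w1 z.
Proof.
  intros H0 H1 H2 H3 Ht Hs E1 E2.
  destruct (klein_surj ((1 - t) * fst (klein u0) + t * fst (klein u1))
                       ((1 - t) * snd (klein u0) + t * snd (klein u1))) as (z & Hz & Ez);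
    [apply disk_convex; auto using klein_in_disk|].
  exists z. split.
  - apply hseg_of_klein_segment with t; auto; rewrite Ez; reflexivity.
  - apply hseg_of_klein_segment with s; auto; rewrite Ez; cbn [fst snd]; assumption.
Qed.

(** * Hypercycles around the imaginary axis *)

(* [z] lies on the curve [x = c |z|] if [s > 0], on its mirror image [x = - c |z|]
   if [s < 0], and [|z| = |s|].  The two curves are the hypercycles at a common
   distance from the imaginary axis; in the Klein model their union is an
   ellipse, along which [s] is a monotone parameter. *)
Definition on_hypercycles (c s : R) (z : point) : Prop :=
  inH z /\ fst z = c * s /\ fst z ^ 2 + snd z ^ 2 = s ^ 2.

Definition ellipse_pt (c s : R) : point := ((s ^ 2 - 1) / (s ^ 2 + 1), - 2 * c * s / (s ^ 2 + 1)).

(* the parameter values [c] and [d] separate [a] and [b] *)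
Definition separates (a b c d : R) : Prop := (a - c) * (b - c) * ((a - d) * (b - d)) < 0.

Lemma hypercycles_exists p : inH p -> exists c r, 0 < r /\ on_hypercycles c r p.
Proof.
  intro Hp. destruct p as [x y]. unfold inH in Hp; simpl in Hp.
  assert (Hn : 0 < x ^ 2 + y ^ 2)
    by (generalize (pow2_ge_0 x); assert (0 < y ^ 2) by (apply pow_lt; lra); lra).
  assert (Hs := sqrt_lt_R0 _ Hn).
  exists (x / sqrt (x ^ 2 + y ^ 2)), (sqrt (x ^ 2 + y ^ 2)).
  split; [exact Hs|]. split; [exact Hp|]. cbn [fst snd]. split.
  - field. lra.
  - rewrite pow2_sqrt; lra.
Qed.

Lemma klein_hypercycles c s z : on_hypercycles c s z -> klein z = ellipse_pt c s.
Proof.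
  intros (Hz & E1 & E2). rewrite klein_eq by exact Hz. unfold ellipse_pt. rewrite E2, E1.
  f_equal. f_equal. ring.
Qed.

Lemma Rdiv_add_in_01 x y : 0 < x * y -> 0 <= x / (x + y) <= 1 /\ x + y <> 0.
Proof.
  intro H. assert (Hs : x + y <> 0) by (intro E; assert (y = - x) by lra; subst; nra).
  split; [|exact Hs].
  assert (Q : x / (x + y) * (x + y) = x) by (field; exact Hs).
  revert Q. generalize (x / (x + y)). intros q Q.
  destruct (Rlt_or_le 0 x).
  - assert (0 < y) by nra. split; nra.
  - assert (y < 0) by nra. split; nra.
Qed.

Lemma ellipse_chords_meet c a b c' d : separates a b c' d ->
  exists t u, 0 <= t <= 1 /\ 0 <= u <= 1 /\
    (1 - t) * fst (ellipse_pt c a) + t * fst (ellipse_pt c b)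
    = (1 - u) * fst (ellipse_pt c c') + u * fst (ellipse_pt c d) /\
    (1 - t) * snd (ellipse_pt c a) + t * snd (ellipse_pt c b)
    = (1 - u) * snd (ellipse_pt c c') + u * snd (ellipse_pt c d).
Proof.
  unfold separates. intro H.
  (* the parameters of the crossing point on either chord, by Cramer's rule *)
  set (n1 := (c' - a) * (d - a) * (b ^ 2 + 1)). set (n2 := - ((c' - b) * (d - b) * (a ^ 2 + 1))).
  set (m1 := (a - c') * (b - c') * (d ^ 2 + 1)). set (m2 := - ((a - d) * (b - d) * (c' ^ 2 + 1))).
  assert (Pa := pow2_ge_0 a). assert (Pb := pow2_ge_0 b).
  assert (Pc := pow2_ge_0 c'). assert (Pd := pow2_ge_0 d).
  destruct (Rdiv_add_in_01 n1 n2) as [Ht Hn0].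
  { replace (n1 * n2)
      with (- ((a - c') * (b - c') * ((a - d) * (b - d))) * ((a ^ 2 + 1) * (b ^ 2 + 1)))
      by (unfold n1, n2; ring).
    apply Rmult_lt_0_compat; nra. }
  destruct (Rdiv_add_in_01 m1 m2) as [Hu Hm0].
  { replace (m1 * m2)
      with (- ((a - c') * (b - c') * ((a - d) * (b - d))) * ((d ^ 2 + 1) * (c' ^ 2 + 1)))
      by (unfold m1, m2; ring).
    apply Rmult_lt_0_compat; nra. }
  exists (n1 / (n1 + n2)), (m1 / (m1 + m2)). split; [exact Ht|]. split; [exact Hu|].
  unfold ellipse_pt; cbn [fst snd]. unfold n1, n2, m1, m2 in *.
  split; field; repeat split; lra.
Qed.

Lemma hseg_meet_of_separates c a b c' d u0 u1 w0 w1 :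
  on_hypercycles c a u0 -> on_hypercycles c b u1 ->
  on_hypercycles c c' w0 -> on_hypercycles c d w1 -> separates a b c' d ->
  exists z, hseg u0 u1 z /\ hseg w0 w1 z.
Proof.
  intros H0 H1 H2 H3 Hs.
  destruct (ellipse_chords_meet c a b c' d Hs) as (t & u & Ht & Hu & E1 & E2).
  rewrite <- (klein_hypercycles _ _ _ H0), <- (klein_hypercycles _ _ _ H1),
    <- (klein_hypercycles _ _ _ H2), <- (klein_hypercycles _ _ _ H3) in E1, E2.
  apply hseg_meet_of_klein_meet with t u;
    [apply H0 | apply H1 | apply H2 | apply H3 | exact Ht | exact Hu | exact E1 | exact E2].
Qed.

Definition dilation (k : R) : mat2 := M2 k 0 0 (/ k).
Definition halfturn (b : R) : mat2 := M2 0 b (- / b) 0.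

Lemma mdet_dilation k : k <> 0 -> mdet (dilation k) = 1.
Proof. intro. unfold mdet, dilation; simpl. field. assumption. Qed.
Lemma mdet_halfturn b : b <> 0 -> mdet (halfturn b) = 1.
Proof. intro. unfold mdet, halfturn; simpl. field. assumption. Qed.
Lemma minv_dilation k : k <> 0 -> minv (dilation k) = dilation (/ k).
Proof. intro. unfold minv, dilation; simpl. rewrite Rinv_inv. f_equal; ring. Qed.
Lemma minv_halfturn b : b <> 0 -> minv (halfturn b) = halfturn (- b).
Proof. intro. unfold minv, halfturn; simpl. rewrite Rinv_opp. f_equal; ring. Qed.

Lemma diag_is_dilation g : mdet g = 1 -> is_diag g -> exists k, k <> 0 /\ g = dilation k.
Proof.
  destruct g as [a b c d]; unfold mdet, is_diag, dilation; simpl; intros H [-> ->].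
  exists a. assert (a <> 0) by (intro; subst; lra). split; [assumption|].
  f_equal. field_simplify_eq; lra.
Qed.
Lemma antidiag_is_halfturn g : mdet g = 1 -> is_antidiag g -> exists b, b <> 0 /\ g = halfturn b.
Proof.
  destruct g as [a b c d]; unfold mdet, is_antidiag, halfturn; simpl; intros H [-> ->].
  exists b. assert (b <> 0) by (intro; subst; lra). split; [assumption|].
  f_equal. field_simplify_eq; lra.
Qed.

Lemma hypercycles_dilation k c s z : k <> 0 -> on_hypercycles c s z ->
  on_hypercycles c (k ^ 2 * s) (moeb (dilation k) z).
Proof.
  intros Hk Hz. split; [apply inH_moeb; [apply mdet_dilation | apply Hz]; assumption|].
  destruct Hz as (Hz & E1 & E2). destruct z as [x y].
  unfold moeb, dilation, mdet in *; cbn [fst snd ma mb mc md] in *.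
  split.
  - rewrite E1. field. exact Hk.
  - transitivity (k ^ 4 * (x ^ 2 + y ^ 2)); [field; exact Hk | rewrite E2; ring].
Qed.

Lemma hypercycles_halfturn b c s z : b <> 0 -> on_hypercycles c s z ->
  on_hypercycles c (- b ^ 2 / s) (moeb (halfturn b) z).
Proof.
  intros Hb Hz. split; [apply inH_moeb; [apply mdet_halfturn | apply Hz]; assumption|].
  destruct Hz as (Hz & E1 & E2). destruct z as [x y].
  unfold moeb, halfturn, mdet, inH in *; cbn [fst snd ma mb mc md] in *.
  assert (Hs : s <> 0) by (intro; subst; assert (0 < y ^ 2) by (apply pow_lt; lra); nra).
  assert (E3 : (- / b * x + 0) ^ 2 + (- / b * y) ^ 2 = s ^ 2 / b ^ 2)
    by (rewrite <- E2; field; exact Hb).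
  rewrite E3. split.
  - rewrite E1. field. auto.
  - transitivity (b ^ 4 * (x ^ 2 + y ^ 2) / s ^ 4); [field; auto | rewrite E2; field; auto].
Qed.

Lemma mtr_mcomm_diag g h : mdet g = 1 -> mdet h = 1 -> is_diag g -> is_diag h ->
  mtr (mcomm g h) = 2.
Proof.
  destruct g as [a b c d], h as [e f k l]; unfold is_diag, mdet, mtr, mcomm, mmul, minv; simpl.
  intros H1 H2 [-> ->] [-> ->].
  transitivity (2 * (a * d - 0 * 0) * (e * l - 0 * 0)); [ring | rewrite H1, H2; ring].
Qed.

Lemma mtr_mcomm_halfturn_dilation b k : b <> 0 -> k <> 0 ->
  mtr (mcomm (halfturn b) (dilation k)) = k ^ 2 + / k ^ 2.
Proof. intros. unfold mtr, mcomm, mmul, minv, halfturn, dilation; simpl. field. auto. Qed.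

Lemma mtr_mcomm_dilation_halfturn k b : k <> 0 -> b <> 0 ->
  mtr (mcomm (dilation k) (halfturn b)) = k ^ 2 + / k ^ 2.
Proof. intros. unfold mtr, mcomm, mmul, minv, halfturn, dilation; simpl. field. auto. Qed.

Lemma mtr_mcomm_halfturn b1 b2 : b1 <> 0 -> b2 <> 0 ->
  mtr (mcomm (halfturn b1) (halfturn b2)) = b1 ^ 2 / b2 ^ 2 + / (b1 ^ 2 / b2 ^ 2).
Proof. intros. unfold mtr, mcomm, mmul, minv, halfturn; simpl. field. auto. Qed.

Lemma neq_1_of_Rabs_add_inv l : 0 < l -> 2 < Rabs (l + / l) -> l <> 1.
Proof. intros Hl H ->. rewrite Rinv_1, Rabs_right in H; lra. Qed.

Lemma separates_geometric r m q : 0 < r -> 0 < m -> m <> 1 -> q < 0 ->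
  separates r (m ^ 2 * r) (m * r) q.
Proof.
  intros Hr Hm Hm1 Hq. unfold separates.
  assert (0 < (m - 1) * (m - 1)) by (apply Rsqr_pos_lt; lra).
  assert (0 < m * (r * r) * ((m - 1) * (m - 1)))
    by (apply Rmult_lt_0_compat; [apply Rmult_lt_0_compat; nra | assumption]).
  assert (0 < (r - q) * (m ^ 2 * r - q)) by (apply Rmult_lt_0_compat; nra).
  replace ((r - m * r) * (m ^ 2 * r - m * r)) with (- (m * (r * r) * ((m - 1) * (m - 1)))) by ring.
  nra.
Qed.

Lemma opp_div_neg a x : 0 < a -> 0 < x -> - a / x < 0.
Proof.
  intros. assert (0 < a / x) by (apply Rdiv_lt_0_compat; assumption). unfold Rdiv in *. lra.
Qed.

Lemma separates_swap a b c d : separates a b c d -> separates a b d c.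
Proof. unfold separates. intro. nra. Qed.

(** * The pentagon *)

Lemma pentagon_vtx g h p : mdet g = 1 -> mdet h = 1 -> inH p ->
  vtx (pentagon g h p) 1 = moeb (minv g) (moeb (minv h) (moeb g (moeb h p))) /\
  vtx (pentagon g h p) 3 = moeb g (moeb h p) /\
  vtx (pentagon g h p) 4 = moeb (minv h) (moeb g (moeb h p)).
Proof.
  intros Hg Hh Hp.
  assert (Hg' : mdet (minv g) = 1) by (rewrite mdet_minv; exact Hg).
  assert (Hh' : mdet (minv h) = 1) by (rewrite mdet_minv; exact Hh).
  assert (Hgh : mdet (mmul g h) = 1) by (rewrite mdet_mmul, Hg, Hh; ring).
  assert (Hhgh : mdet (mmul (minv h) (mmul g h)) = 1) by (rewrite mdet_mmul, Hh', Hgh; ring).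
  unfold vtx; simpl nth. rewrite !moeb_mmul; auto.
Qed.

Lemma pentagon_edges_meet_halfturn_dilation b k p : b <> 0 -> k <> 0 -> k ^ 2 <> 1 -> inH p ->
  exists z, hseg (vtx (pentagon (halfturn b) (dilation k) p) 0)
                 (vtx (pentagon (halfturn b) (dilation k) p) 1) z /\
            hseg (vtx (pentagon (halfturn b) (dilation k) p) 2)
                 (vtx (pentagon (halfturn b) (dilation k) p) 3) z.
Proof.
  (* vertex parameters along the hypercycles: r, k^4 r, k^2 r, -b^2/(k^2 r) *)
  intros Hb Hk Hk1 Hp. destruct (hypercycles_exists p Hp) as (c & r & Hr & H0).
  destruct (pentagon_vtx (halfturn b) (dilation k) p) as (-> & -> & _);
    auto using mdet_halfturn, mdet_dilation.
  rewrite minv_halfturn, minv_dilation by assumption.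
  assert (H2 := hypercycles_dilation k c r p Hk H0).
  assert (H3 := hypercycles_halfturn b _ _ _ Hb H2).
  assert (H1 := hypercycles_halfturn (- b) _ _ _ ltac:(lra)
                  (hypercycles_dilation (/ k) _ _ _ ltac:(auto with real) H3)).
  eapply hseg_meet_of_separates; [exact H0 | exact H1 | exact H2 | exact H3 |].
  assert (0 < k ^ 2) by (apply pow2_pos; exact Hk).
  assert (0 < b ^ 2) by (apply pow2_pos; exact Hb).
  match goal with |- separates _ ?s1 _ _ =>
    replace s1 with ((k ^ 2) ^ 2 * r) by (field; repeat split; auto; lra) end.
  apply separates_geometric, opp_div_neg; auto.
  apply Rmult_lt_0_compat; assumption.
Qed.

Lemma pentagon_edges_meet_dilation_halfturn k b p : k <> 0 -> b <> 0 -> k ^ 2 <> 1 -> inH p ->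
  exists z, hseg (vtx (pentagon (dilation k) (halfturn b) p) 0)
                 (vtx (pentagon (dilation k) (halfturn b) p) 1) z /\
            hseg (vtx (pentagon (dilation k) (halfturn b) p) 3)
                 (vtx (pentagon (dilation k) (halfturn b) p) 4) z.
Proof.
  (* vertex parameters along the hypercycles: r, r/k^4, -k^2 b^2/r, r/k^2 *)
  intros Hk Hb Hk1 Hp. destruct (hypercycles_exists p Hp) as (c & r & Hr & H0).
  destruct (pentagon_vtx (dilation k) (halfturn b) p) as (-> & -> & ->);
    auto using mdet_halfturn, mdet_dilation.
  rewrite minv_halfturn, minv_dilation by assumption.
  assert (H3 := hypercycles_dilation k _ _ _ Hk (hypercycles_halfturn b c r p Hb H0)).
  assert (H4 := hypercycles_halfturn (- b) _ _ _ ltac:(lra) H3).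
  assert (H1 := hypercycles_dilation (/ k) _ _ _ ltac:(auto with real) H4).
  eapply hseg_meet_of_separates; [exact H0 | exact H1 | exact H3 | exact H4 |].
  assert (0 < k ^ 2) by (apply pow2_pos; exact Hk).
  assert (0 < b ^ 2) by (apply pow2_pos; exact Hb).
  match goal with |- separates _ ?s1 ?s3 ?s4 =>
    replace s1 with ((/ k ^ 2) ^ 2 * r) by (field; repeat split; auto; lra);
    replace s4 with (/ k ^ 2 * r) by (field; repeat split; auto; lra);
    replace s3 with (- (k ^ 2 * b ^ 2) / r) by (field; repeat split; auto; lra) end.
  apply separates_swap, separates_geometric, opp_div_neg; auto with real.
  - intro E. apply Hk1. rewrite <- (Rinv_inv (k ^ 2)), E. apply Rinv_1.
  - apply Rmult_lt_0_compat; assumption.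
Qed.

Lemma pentagon_edges_meet_halfturn_halfturn b1 b2 p : b1 <> 0 -> b2 <> 0 ->
  b1 ^ 2 / b2 ^ 2 <> 1 -> inH p ->
  exists z, hseg (vtx (pentagon (halfturn b1) (halfturn b2) p) 0)
                 (vtx (pentagon (halfturn b1) (halfturn b2) p) 1) z /\
            hseg (vtx (pentagon (halfturn b1) (halfturn b2) p) 2)
                 (vtx (pentagon (halfturn b1) (halfturn b2) p) 3) z.
Proof.
  (* vertex parameters along the hypercycles: r, m^2 r, -b2^2/r, m r with m = b1^2/b2^2 *)
  intros Hb1 Hb2 Hm Hp. destruct (hypercycles_exists p Hp) as (c & r & Hr & H0).
  destruct (pentagon_vtx (halfturn b1) (halfturn b2) p) as (-> & -> & _);
    auto using mdet_halfturn.
  rewrite !minv_halfturn by assumption.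
  assert (H2 := hypercycles_halfturn b2 c r p Hb2 H0).
  assert (H3 := hypercycles_halfturn b1 _ _ _ Hb1 H2).
  assert (H1 := hypercycles_halfturn (- b1) _ _ _ ltac:(lra)
                  (hypercycles_halfturn (- b2) _ _ _ ltac:(lra) H3)).
  eapply hseg_meet_of_separates; [exact H0 | exact H1 | exact H2 | exact H3 |].
  assert (0 < b1 ^ 2) by (apply pow2_pos; exact Hb1).
  assert (0 < b2 ^ 2) by (apply pow2_pos; exact Hb2).
  match goal with |- separates _ ?s1 _ ?s3 =>
    replace s1 with ((b1 ^ 2 / b2 ^ 2) ^ 2 * r) by (field; repeat split; auto; lra);
    replace s3 with (b1 ^ 2 / b2 ^ 2 * r) by (field; repeat split; auto; lra) end.
  apply separates_swap, separates_geometric, opp_div_neg; auto.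
  apply Rdiv_lt_0_compat; assumption.
Qed.

Lemma not_simple_of_edges_meet P j z : simple_polygon P -> (j = 2 \/ j = 3)%nat ->
  hseg (vtx P 0) (vtx P 1) z -> hseg (vtx P j) (vtx P (S j)) z -> False.
Proof.
  intros HS Hj H1 H2.
  destruct (HS 0%nat j z) as [[E _] | [E _]]; auto; try lia; destruct Hj; subst; discriminate.
Qed.

Lemma pentagon_not_simple g h p : mdet g = 1 -> mdet h = 1 -> inH p ->
  is_diag g \/ is_antidiag g -> is_diag h \/ is_antidiag h -> 2 < Rabs (mtr (mcomm g h)) ->
  ~ simple_polygon (pentagon g h p).
Proof.
  intros Hg Hh Hp [Dg | Ag] [Dh | Ah] Htr HS.
  - rewrite mtr_mcomm_diag in Htr by assumption. rewrite Rabs_right in Htr; lra.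
  - destruct (diag_is_dilation g Hg Dg) as (k & Hk & ->).
    destruct (antidiag_is_halfturn h Hh Ah) as (b & Hb & ->).
    rewrite mtr_mcomm_dilation_halfturn in Htr by assumption.
    destruct (pentagon_edges_meet_dilation_halfturn k b p) as (z & H1 & H2);
      auto using neq_1_of_Rabs_add_inv, pow2_pos.
    apply (not_simple_of_edges_meet _ 3 z HS); auto.
  - destruct (antidiag_is_halfturn g Hg Ag) as (b & Hb & ->).
    destruct (diag_is_dilation h Hh Dh) as (k & Hk & ->).
    rewrite mtr_mcomm_halfturn_dilation in Htr by assumption.
    destruct (pentagon_edges_meet_halfturn_dilation b k p) as (z & H1 & H2);
      auto using neq_1_of_Rabs_add_inv, pow2_pos.
    apply (not_simple_of_edges_meet _ 2 z HS); auto.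
  - destruct (antidiag_is_halfturn g Hg Ag) as (b1 & Hb1 & ->).
    destruct (antidiag_is_halfturn h Hh Ah) as (b2 & Hb2 & ->).
    rewrite mtr_mcomm_halfturn in Htr by assumption.
    destruct (pentagon_edges_meet_halfturn_halfturn b1 b2 p) as (z & H1 & H2); auto.
    { apply neq_1_of_Rabs_add_inv; [apply Rdiv_lt_0_compat; apply pow2_pos |]; assumption. }
    apply (not_simple_of_edges_meet _ 2 z HS); auto.
Qed.

Lemma moeb_mconj M W p : mdet M = 1 -> mdet W = 1 -> inH p ->
  moeb (mconj M W) (moeb M p) = moeb M (moeb W p).
Proof.
  intros HM HW Hp. unfold mconj.
  assert (HM' : mdet (minv M) = 1) by (rewrite mdet_minv; exact HM).
  rewrite moeb_mmul, moeb_mmul, moeb_minv_moeb; auto using inH_moeb.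
  rewrite mdet_mmul, HW, HM'. ring.
Qed.

Lemma pentagon_mconj M g h p : mdet M = 1 -> mdet g = 1 -> mdet h = 1 -> inH p ->
  pentagon (mconj M g) (mconj M h) (moeb M p) = map (moeb M) (pentagon g h p).
Proof.
  intros HM Hg Hh Hp.
  assert (Hg' : mdet (minv g) = 1) by (rewrite mdet_minv; exact Hg).
  assert (Hh' : mdet (minv h) = 1) by (rewrite mdet_minv; exact Hh).
  unfold pentagon. simpl map.
  rewrite <- !mconj_minv, <- !mconj_mmul by exact HM.
  rewrite !moeb_mconj; rewrite ?mdet_mmul, ?Hg, ?Hh, ?Hg', ?Hh'; auto; ring.
Qed.

Lemma inH_pentagon g h p : mdet g = 1 -> mdet h = 1 -> inH p ->
  forall q, In q (pentagon g h p) -> inH q.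
Proof.
  intros Hg Hh Hp q Hq.
  assert (Hg' : mdet (minv g) = 1) by (rewrite mdet_minv; exact Hg).
  assert (Hh' : mdet (minv h) = 1) by (rewrite mdet_minv; exact Hh).
  simpl in Hq. repeat destruct Hq as [<- | Hq]; try contradiction; auto;
    apply inH_moeb; auto; rewrite ?mdet_mmul, ?Hg, ?Hh, ?Hg', ?Hh'; ring.
Qed.

Lemma vtx_map f P i : length P = 5%nat -> vtx (map f P) i = f (vtx P i).
Proof.
  intro HL. unfold vtx.
  rewrite nth_indep with (d' := f (0, 1)), map_nth; [reflexivity|].
  rewrite length_map, HL. apply Nat.mod_upper_bound. lia.
Qed.

Lemma In_vtx P i : length P = 5%nat -> In (vtx P i) P.
Proof. intro HL. apply nth_In. rewrite HL. apply Nat.mod_upper_bound. lia. Qed.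

Lemma simple_polygon_map_moeb M P : mdet M = 1 -> length P = 5%nat ->
  (forall q, In q P -> inH q) -> simple_polygon P -> simple_polygon (map (moeb M) P).
Proof.
  intros HM HL HP HS i j z Hi Hj Hij H1 H2.
  assert (HM' : mdet (minv M) = 1) by (rewrite mdet_minv; exact HM).
  assert (Ez : z = moeb M (moeb (minv M) z)).
  { rewrite <- moeb_mmul, mmul_minv_r, moeb_mid; auto. apply H1. }
  rewrite !vtx_map in * by exact HL.
  apply hseg_moeb with (M := minv M) in H1, H2; auto using In_vtx, inH_moeb.
  rewrite !moeb_minv_moeb in H1, H2 by auto using In_vtx.
  destruct (HS i j _ Hi Hj Hij H1 H2) as [[E1 E2] | [E1 E2]]; [left | right];
    (split; [exact E1 | rewrite Ez, E2; reflexivity]).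
Qed.

Theorem lemma5p12 (A B : mat2) :
  mdet A = 1 -> mdet B = 1 ->
  virtually_abelian A B ->
  (exists w1 w2 : word, is_free_basis w1 w2 /\ 2 < mtr (eval A B (comm_word w1 w2))) ->
  forall (o s : bool) (eps : R), 0 < eps -> eps_bad A B o s eps.
Proof.
  intros HA HB VA _ o s eps _ (w1 & w2 & p & _ & _ & Htr & Hp & _ & _ & Hsimple & _).
  rewrite eval_comm_word in Htr.
  set (g := eval A B w1) in *. set (h := eval A B w2) in *.
  assert (Ig : image A B g) by apply image_eval.
  assert (Ih : image A B h) by apply image_eval.
  assert (IC : image A B (mcomm g h)) by (unfold mcomm; auto using image_mmul, image_minv).
  assert (dg : mdet g = 1) by exact (mdet_image A B g HA HB Ig).
  assert (dh : mdet h = 1) by exact (mdet_image A B h HA HB Ih).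
  destruct (hyperbolic_diagonalizable (mcomm g h)) as (M & HM & DC);
    [exact (mdet_image A B _ HA HB IC) | exact Htr |].
  apply (pentagon_not_simple (mconj M g) (mconj M h) (moeb M p)).
  - rewrite mdet_mconj; assumption.
  - rewrite mdet_mconj; assumption.
  - apply inH_moeb; assumption.
  - apply (virtually_abelian_diag_or_antidiag A B M (mcomm g h)); assumption.
  - apply (virtually_abelian_diag_or_antidiag A B M (mcomm g h)); assumption.
  - rewrite <- mconj_mcomm, mtr_mconj; assumption.
  - rewrite pentagon_mconj by assumption.
    exact (simple_polygon_map_moeb M (pentagon g h p) HM eq_refl
             (inH_pentagon g h p dg dh Hp) Hsimple).
Qed.
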